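(* Let $n\ge2$ be an integer and $\tau=\inf\{t\ge0: p_t\ge n\}$ for the Markov chain $(p_t)$ with $p_0=1$ defined in the context. Then $\mathbb{E}[\tau]\le (n^2-n+2)/2$.
   Context: $(p_t)_{t\ge0}$ is a time-homogeneous Markov chain on the positive integers with $p_0=1$ and transitions: if $p_t=p\ge2$, then $\mathbb{P}(p_{t+1}=p+j)=(1/2)^{j+2}$ for $j\in\{-1,0,1,2,\dots\}$; if $p_t=1$, then $\mathbb{P}(p_{t+1}=1+j)=(1/2)^{j+1}$ for $j\in\{0,1,2,\dots\}$. (It models the position of a $*$ symbol, started in the first position, in the deterministic-scan bounding chain; $\tau$ is the number of scans until it reaches position $n$.) *)

From Stdlib Require Import Reals Lra Lia Bool.
From Coquelicot Require Import Coquelicot.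
Open Scope R_scope.

(* One-step transition probability P(p_{t+1} = q | p_t = p) for p, q >= 1.
   If p >= 2: P(p -> p + j) = (1/2)^(j+2) for j >= -1, i.e. q >= p-1,
              exponent j + 2 = q + 2 - p.
   If p = 1:  P(1 -> 1 + j) = (1/2)^(j+1) for j >= 0, i.e. exponent q. *)
Definition trans (p q : nat) : R :=
  if (p =? 0)%nat then 0
  else if (q =? 0)%nat then 0
  else if (p =? 1)%nat then (1/2) ^ q
  else if (p - 1 <=? q)%nat then (1/2) ^ (q + 2 - p)
  else 0.

Fixpoint sumk (m : nat) (f : nat -> R) : R :=
  match m with
  | O => 0
  | S m' => sumk m' f + f m
  end.

(* killed t k = P(p_t = k and p_s < n for all s <= t)  (i.e. P(p_t = k, tau > t)),
   for the chain started at p_0 = 1; supported on 1 <= k <= n-1. *)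
Fixpoint killed (n t k : nat) : R :=
  match t with
  | O => if (andb (k =? 1)%nat (k <? n)%nat) then 1 else 0
  | S t' => if (andb (1 <=? k)%nat (k <? n)%nat)
            then sumk (n - 1) (fun j => killed n t' j * trans j k)
            else 0
  end.

Definition tail_prob (n t : nat) : R := sumk (n - 1) (fun k => killed n t k).

(* E[tau] = sum_{t >= 0} P(tau > t)  (tail-sum formula, valid in [0, +oo]);
   E[tau] < +oo iff this series converges. *)

(* The potential F k = (n^2 - n + 3k - k^2)/2 is nonnegative on {1, ..., n-1}
   and, for the chain killed on reaching n, decreases in expectation by exactly
   one at every step: the rows of the transition kernel are geometric and
   F m = 2 G m - G (m+1) with G m = (n^2 - n + m - m^2)/2 and G n = 0, so the
   averages of F telescope.  Hence V t = E[F(p_t); tau > t] satisfies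
   V (t+1) = V t - P(tau > t), and the partial sums of P(tau > t) are bounded
   by V 0 = F 1 = (n^2 - n + 2)/2. *)
From Stdlib Require Import Reals Lra Lia Bool.
From Coquelicot Require Import Coquelicot.
Open Scope R_scope.

Lemma sumk_ext m f g :
  (forall j, (1 <= j <= m)%nat -> f j = g j) -> sumk m f = sumk m g.
Proof.
  induction m as [|m IH]; simpl; intros Hfg; [reflexivity|].
  rewrite IH, Hfg; [reflexivity|lia|]. intros j Hj; apply Hfg; lia.
Qed.

Lemma sumk_zero m : sumk m (fun _ => 0) = 0.
Proof. induction m as [|m IH]; simpl; [|rewrite IH]; lra. Qed.

Lemma sumk_add m f g : sumk m (fun j => f j + g j) = sumk m f + sumk m g.
Proof. induction m as [|m IH]; simpl; [|rewrite IH]; lra. Qed.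

Lemma sumk_scal m c f : sumk m (fun j => c * f j) = c * sumk m f.
Proof. induction m as [|m IH]; simpl; [|rewrite IH]; lra. Qed.

Lemma sumk_comm m l h :
  sumk m (fun k => sumk l (fun j => h j k)) = sumk l (fun j => sumk m (fun k => h j k)).
Proof.
  induction m as [|m IH]; simpl.
  - symmetry; apply sumk_zero.
  - rewrite IH, <- sumk_add. reflexivity.
Qed.

Lemma sumk_nonneg m f : (forall j, (1 <= j <= m)%nat -> 0 <= f j) -> 0 <= sumk m f.
Proof.
  induction m as [|m IH]; simpl; intros Hf; [lra|].
  assert (0 <= sumk m f) by (apply IH; intros; apply Hf; lia).
  assert (0 <= f (S m)) by (apply Hf; lia).
  lra.
Qed.

Lemma sumk_only1 m f :
  (1 <= m)%nat -> (forall j, j <> 1%nat -> f j = 0) -> sumk m f = f 1%nat.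
Proof.
  intros Hm Hf; induction m as [|m IH]; [lia|].
  destruct m as [|m]; simpl in *; [lra|].
  rewrite IH, (Hf (S (S m))) by lia. lra.
Qed.

Lemma series_of_nonneg_bounded (a : nat -> R) (M : R) :
  (forall t, 0 <= a t) -> (forall T, sum_n a T <= M) ->
  ex_series a /\ Series a <= M.
Proof.
  intros Ha HM.
  assert (Hincr : forall T, sum_n a T <= sum_n a (S T)).
  { intros T. rewrite sum_Sn. unfold plus; simpl. specialize (Ha (S T)). lra. }
  destruct (ex_finite_lim_seq_incr _ _ Hincr HM) as [l Hl].
  assert (Hsum : Series a = l).
  { unfold Series. rewrite (is_lim_seq_unique _ _ Hl). reflexivity. }
  split; [exists l; exact Hl|].
  rewrite Hsum.
  exact (is_lim_seq_le _ _ _ _ HM Hl (is_lim_seq_const M)).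
Qed.

Lemma trans_nonneg p q : 0 <= trans p q.
Proof.
  unfold trans.
  destruct (p =? 0)%nat; [lra|]. destruct (q =? 0)%nat; [lra|].
  destruct (p =? 1)%nat; [apply pow_le; lra|].
  destruct (p - 1 <=? q)%nat; [apply pow_le; lra|lra].
Qed.

Definition geom (p j : nat) : R := if (p <? j)%nat then (1/2) ^ (j - p) else 0.

(* Both kinds of rows of the kernel are the geometric row started after k - 2,
   using truncated subtraction for k = 1. *)
Lemma trans_geom k j : (1 <= k)%nat -> (1 <= j)%nat -> trans k j = geom (k - 2) j.
Proof.
  intros Hk Hj. unfold trans, geom.
  destruct j as [|j]; [lia|].
  destruct k as [|[|p]]; [lia|reflexivity|].
  replace (S (S p) - 2)%nat with p by lia.
  replace (S (S p) - 1)%nat with (S p) by lia.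
  simpl Nat.eqb; cbv match.
  change (p <? S j)%nat with (S p <=? S j)%nat.
  destruct (S p <=? S j)%nat; [f_equal; lia|reflexivity].
Qed.

Lemma sumk_geom_telescope (G : nat -> R) p i :
  sumk (p + i) (fun j => geom p j * (2 * G j - G (S j)))
  = G (S p) - (1/2) ^ i * G (S (p + i)).
Proof.
  induction i as [|i IH].
  - rewrite Nat.add_0_r, (sumk_ext _ _ (fun _ => 0)), sumk_zero.
    + simpl; lra.
    + intros j Hj. unfold geom.
      replace (p <? j)%nat with false by (symmetry; apply Nat.ltb_ge; lia). lra.
  - replace (p + S i)%nat with (S (p + i)) by lia. simpl sumk.
    rewrite IH. unfold geom.
    replace (p <? S (p + i))%nat with true by (symmetry; apply Nat.ltb_lt; lia).
    replace (S (p + i) - p)%nat with (S i) by lia.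
    simpl pow. lra.
Qed.

Section Potential.

Variable n : nat.

Definition potential (k : nat) : R := (INR n ^ 2 - INR n + 3 * INR k - INR k ^ 2) / 2.

Definition potential_prim (k : nat) : R := (INR n ^ 2 - INR n + INR k - INR k ^ 2) / 2.

Lemma potential_prim_step m : potential m = 2 * potential_prim m - potential_prim (S m).
Proof. unfold potential, potential_prim. rewrite S_INR. field. Qed.

Lemma potential_prim_n : potential_prim n = 0.
Proof. unfold potential_prim. field. Qed.

Lemma potential_prim_pred k : (1 <= k)%nat -> potential_prim (S (k - 2)) = potential k - 1.
Proof.
  intros Hk. unfold potential, potential_prim.
  destruct k as [|[|p]]; [lia|simpl; field|].
  replace (S (S (S p) - 2)) with (S p) by lia.
  rewrite (S_INR (S p)). field.
Qed.

Lemma potential_nonneg k : (1 <= k <= n - 1)%nat -> 0 <= potential k.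
Proof.
  intros Hk. unfold potential.
  assert (1 <= INR k) by (apply (le_INR 1); lia).
  assert (INR k + 1 <= INR n) by (rewrite <- S_INR; apply le_INR; lia).
  nra.
Qed.

Lemma potential_drift k :
  (1 <= k <= n - 1)%nat ->
  sumk (n - 1) (fun j => trans k j * potential j) = potential k - 1.
Proof.
  intros Hk.
  rewrite (sumk_ext _ _
    (fun j => geom (k - 2) j * (2 * potential_prim j - potential_prim (S j)))).
  2: { intros j Hj. rewrite trans_geom, potential_prim_step by lia. reflexivity. }
  replace (n - 1)%nat with (k - 2 + (n - 1 - (k - 2)))%nat by lia.
  rewrite sumk_geom_telescope.
  replace (S (k - 2 + (n - 1 - (k - 2)))) with n by lia.
  rewrite potential_prim_n, potential_prim_pred by lia. lra.
Qed.

Lemma killed_nonneg t k : 0 <= killed n t k.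
Proof.
  revert k; induction t as [|t IH]; intros k; simpl.
  - destruct (_ && _); lra.
  - destruct (_ && _); [|lra].
    apply sumk_nonneg; intros j _.
    apply Rmult_le_pos; [apply IH|apply trans_nonneg].
Qed.

Lemma tail_prob_nonneg t : 0 <= tail_prob n t.
Proof. apply sumk_nonneg; intros; apply killed_nonneg. Qed.

Lemma killed_S t k :
  (1 <= k < n)%nat -> killed n (S t) k = sumk (n - 1) (fun j => killed n t j * trans j k).
Proof.
  intros Hk. destruct k as [|k]; [lia|]. simpl.
  replace (S k <? n)%nat with true by (symmetry; apply Nat.ltb_lt; lia).
  reflexivity.
Qed.

Definition killed_potential (t : nat) : R :=
  sumk (n - 1) (fun k => killed n t k * potential k).

Lemma killed_potential_nonneg t : 0 <= killed_potential t.
Proof.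
  apply sumk_nonneg; intros k Hk.
  apply Rmult_le_pos; [apply killed_nonneg|apply potential_nonneg; lia].
Qed.

Lemma killed_potential_S t : killed_potential (S t) = killed_potential t - tail_prob n t.
Proof.
  unfold killed_potential, tail_prob.
  rewrite (sumk_ext _ _
    (fun k => sumk (n - 1) (fun j => killed n t j * (trans j k * potential k)))).
  2: { intros k Hk. rewrite killed_S by lia.
       rewrite Rmult_comm, <- sumk_scal. apply sumk_ext; intros; lra. }
  rewrite sumk_comm.
  rewrite (sumk_ext _ _ (fun j => killed n t j * potential j + (-1) * killed n t j)).
  - rewrite sumk_add, sumk_scal.
    change (fun k => killed n t k) with (killed n t). lra.
  - intros j Hj. rewrite sumk_scal, potential_drift by lia. lra.
Qed.

Lemma killed_potential_0 : (2 <= n)%nat -> killed_potential 0 = potential 1.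
Proof.
  intros Hn. unfold killed_potential.
  rewrite sumk_only1; [|lia|].
  - simpl. replace (1 <? n)%nat with true by (symmetry; apply Nat.ltb_lt; lia). lra.
  - intros j Hj. simpl.
    replace (j =? 1)%nat with false by (symmetry; apply Nat.eqb_neq; exact Hj).
    simpl; lra.
Qed.

Lemma sum_tail_prob T :
  sum_n (tail_prob n) T = killed_potential 0 - killed_potential (S T).
Proof.
  induction T as [|T IH].
  - rewrite sum_O, killed_potential_S. lra.
  - rewrite sum_Sn, IH, (killed_potential_S (S T)). unfold plus; simpl. lra.
Qed.

End Potential.

Theorem lemma5 (n : nat) (hn : (2 <= n)%nat) :
  ex_series (fun t => tail_prob n t) /\
  Series (fun t => tail_prob n t) <= (INR n ^ 2 - INR n + 2) / 2.
Proof.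
  apply series_of_nonneg_bounded; [apply tail_prob_nonneg|].
  intros T.
  rewrite sum_tail_prob, killed_potential_0 by exact hn.
  pose proof (killed_potential_nonneg n (S T)).
  unfold potential; simpl INR. lra.
Qed.
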